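(* Let $S\subseteq\Sigma$ and let $Q_1,\ldots,Q_n$ ($n\ge1$) be atomic assertions. Then \[ S\not\vDash Q_1\oplus\cdots\oplus Q_n \quad\text{iff}\quad \exists i.\ S\vDash\overline{Q}_i \ \text{ or }\ S\vDash(\overline{Q}_1\land\cdots\land\overline{Q}_n)\oplus\top \ \text{ or }\ S\vDash\top^\oplus . \]
   Context: Nondeterministic outcome assertions: given a satisfaction relation $\vDash_\Sigma$ between program states $\sigma\in\Sigma$ and atomic assertions, a set $S\subseteq\Sigma$ satisfies an atomic assertion $P$ iff $S\neq\emptyset$ and $\sigma\vDash_\Sigma P$ for all $\sigma\in S$. Atomic assertions are closed under negation: $\overline{Q}$ is the atomic assertion with $\sigma\vDash_\Sigma\overline{Q}$ iff $\sigma\not\vDash_\Sigma Q$. Compound assertions: $S\vDash\top$ always; $S\vDash\top^\oplus$ iff $S=\emptyset$; $S\vDash\varphi\land\psi$ iff $S\vDash\varphi$ and $S\vDash\psi$; $S\vDash\varphi\oplus\psi$ iff there are $S_1,S_2$ with $S_1\cup S_2=S$, $S_1\vDash\varphi$, $S_2\vDash\psi$. *)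

From Stdlib Require Import Arith.
Set Implicit Arguments.

Inductive assn (A : Type) : Type :=
| Atom (a : A)
| Top
| TopPlus
| And (p q : assn A)
| Oplus (p q : assn A).

Arguments Top {A}.
Arguments TopPlus {A}.

Section Sem.
Variables (Sigma A : Type) (sat : Sigma -> A -> Prop).

Fixpoint models (S : Sigma -> Prop) (phi : assn A) : Prop :=
  match phi with
  | Atom a => (exists s, S s) /\ (forall s, S s -> sat s a)
  | Top => True
  | TopPlus => forall s, ~ S s
  | And p q => models S p /\ models S q
  | Oplus p q => exists S1 S2 : Sigma -> Prop,
      (forall s, S s <-> (S1 s \/ S2 s)) /\ models S1 p /\ models S2 q
  end.
End Sem.

(* f 0 (+) f 1 (+) ... (+) f (n-1), for n >= 1 (left-nested). *)
Fixpoint bigOplus (A : Type) (f : nat -> assn A) (n : nat) : assn A :=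
  match n with
  | 0 => TopPlus
  | 1 => f 0
  | S m => Oplus (bigOplus f m) (f m)
  end.

(* f 0 /\ f 1 /\ ... /\ f (n-1), for n >= 1 (left-nested). *)
Fixpoint bigAnd (A : Type) (f : nat -> assn A) (n : nat) : assn A :=
  match n with
  | 0 => Top
  | 1 => f 0
  | S m => And (bigAnd f m) (f m)
  end.

(** S fails to satisfy Q_1 ⊕ ... ⊕ Q_n exactly when either some Q_i has no
    witness in S, or some state of S satisfies no Q_i.  In the first case S
    satisfies the atom ¬Q_i, or is empty; in the second the singleton of that
    state satisfies ¬Q_1 ∧ ... ∧ ¬Q_n, and ⊕ ⊤ absorbs the rest of S. *)

From Stdlib Require Import Arith Lia Classical.

Section Models.
Context {Sigma A : Type} {sat : Sigma -> A -> Prop}.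

Lemma models_Oplus_Top (X : Sigma -> Prop) (p : assn A) :
  models sat X (Oplus p Top) <->
  exists X1 : Sigma -> Prop, (forall s, X1 s -> X s) /\ models sat X1 p.
Proof.
  simpl; split.
  - intros [X1 [X2 [HX [Hp _]]]].
    exists X1; split; [intros s Hs; apply HX; left|]; assumption.
  - intros [X1 [HX1 Hp]].
    exists X1, X; repeat split; firstorder.
Qed.

Lemma models_bigAnd (f : nat -> assn A) (n : nat) (X : Sigma -> Prop) :
  1 <= n -> models sat X (bigAnd f n) <-> forall i, i < n -> models sat X (f i).
Proof.
  intros Hn; destruct n as [|m]; [lia|]; clear Hn.
  induction m as [|m IH].
  - split; [intros Hf i Hi; replace i with 0 by lia|intros H; apply H; lia]; assumption.
  - change (bigAnd f (S (S m))) with (And (bigAnd f (S m)) (f (S m))).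
    cbn [models].
    rewrite IH; split.
    + intros [Hlt Hm] i Hi.
      destruct (Nat.eq_dec i (S m)) as [->|Hne]; [|apply Hlt; lia]; assumption.
    + intros H; split; [intros i Hi|]; apply H; lia.
Qed.

Lemma models_bigOplus_Atom (Q : nat -> A) (n : nat) (X : Sigma -> Prop) :
  1 <= n ->
  models sat X (bigOplus (fun i => Atom (Q i)) n) <->
  (forall i, i < n -> exists s, X s /\ sat s (Q i)) /\
  (forall s, X s -> exists i, i < n /\ sat s (Q i)).
Proof.
  intros Hn; destruct n as [|m]; [lia|]; clear Hn.
  revert X; induction m as [|m IH]; intros X.
  - simpl; split.
    + intros [[s Hs] Hsat]; split.
      * intros i Hi; replace i with 0 by lia; exists s; auto.
      * intros s' Hs'; exists 0; auto.
    + intros [Hwit Hcov]; split.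
      * destruct (Hwit 0) as [s [Hs _]]; [lia|]; exists s; assumption.
      * intros s Hs; destruct (Hcov s Hs) as [i [Hi Hq]].
        replace i with 0 in Hq by lia; assumption.
  - change (bigOplus _ (S (S m)))
      with (Oplus (bigOplus (fun i => Atom (Q i)) (S m)) (Atom (Q (S m)))).
    cbn [models].
    setoid_rewrite IH; split.
    + intros [X1 [X2 [HX [[Hwit Hcov] [[s2 Hs2] Hsat2]]]]]; split.
      * intros i Hi; destruct (Nat.eq_dec i (S m)) as [->|Hne].
        -- exists s2; split; [apply HX; right|apply Hsat2]; assumption.
        -- destruct (Hwit i) as [s [Hs Hq]]; [lia|].
           exists s; split; [apply HX; left|]; assumption.
      * intros s Hs; apply HX in Hs as [Hs|Hs].
        -- destruct (Hcov s Hs) as [i [Hi Hq]]; exists i; split; [lia|assumption].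
        -- exists (S m); split; [lia|auto].
    + intros [Hwit Hcov].
      exists (fun s => X s /\ exists i, i < S m /\ sat s (Q i)),
             (fun s => X s /\ sat s (Q (S m))).
      split; [|split; [split|split]].
      * intros s; split; [|intros [[Hs _]|[Hs _]]; assumption].
        intros Hs; destruct (Hcov s Hs) as [i [Hi Hq]].
        destruct (Nat.eq_dec i (S m)) as [->|Hne]; [right|left]; split; auto.
        exists i; split; [lia|assumption].
      * intros i Hi; destruct (Hwit i) as [s [Hs Hq]]; [lia|].
        exists s; split; [split; [|exists i]|]; auto.
      * intros s [_ [i Hi]]; exists i; assumption.
      * destruct (Hwit (S m)) as [s [Hs Hq]]; [lia|]; exists s; auto.
      * intros s [_ Hq]; assumption.
Qed.

Lemma not_witnessed_and_covered (P : nat -> Sigma -> Prop) (n : nat)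
  (X : Sigma -> Prop) :
  ~ ((forall i, i < n -> exists s, X s /\ P i s) /\
     (forall s, X s -> exists i, i < n /\ P i s)) <->
  (exists i, i < n /\ forall s, X s -> ~ P i s) \/
  (exists s, X s /\ forall i, i < n -> ~ P i s).
Proof.
  split.
  - intros Hfail; apply not_and_or in Hfail as [Hwit|Hcov]; [left|right].
    + apply not_all_ex_not in Hwit as [i Hwit].
      apply imply_to_and in Hwit as [Hi Hnone].
      exists i; split; [assumption|intros s Hs Hp; eauto].
    + apply not_all_ex_not in Hcov as [s Hcov].
      apply imply_to_and in Hcov as [Hs Hnone].
      exists s; split; [assumption|intros i Hi Hp; eauto].
  - intros [[i [Hi Hnone]]|[s [Hs Hnone]]] [Hwit Hcov].
    + destruct (Hwit i Hi) as [s [Hs Hp]]; exact (Hnone s Hs Hp).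
    + destruct (Hcov s Hs) as [i [Hi Hp]]; exact (Hnone i Hi Hp).
Qed.

Context {neg : A -> A} (Hneg : forall s a, sat s (neg a) <-> ~ sat s a).

Lemma models_Atom_neg_or_TopPlus (Q : nat -> A) (n : nat) (X : Sigma -> Prop) :
  1 <= n ->
  (exists i, i < n /\ forall s, X s -> ~ sat s (Q i)) <->
  (exists i, i < n /\ models sat X (Atom (neg (Q i)))) \/ models sat X TopPlus.
Proof.
  intros Hn; simpl; setoid_rewrite Hneg; split.
  - intros [i [Hi Hnone]].
    destruct (classic (exists s, X s)) as [Hne|Hempty]; [left|right].
    + exists i; auto.
    + intros s Hs; apply Hempty; exists s; assumption.
  - intros [[i [Hi [_ Hnone]]]|Hempty].
    + exists i; auto.
    + exists 0; split; [lia|intros s Hs; contradiction (Hempty s)].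
Qed.

Lemma models_bigAnd_neg_Oplus_Top (Q : nat -> A) (n : nat) (X : Sigma -> Prop) :
  1 <= n ->
  (exists s, X s /\ forall i, i < n -> ~ sat s (Q i)) <->
  models sat X (Oplus (bigAnd (fun i => Atom (neg (Q i))) n) Top).
Proof.
  intros Hn; rewrite models_Oplus_Top.
  setoid_rewrite (models_bigAnd _ _ _ Hn); simpl; setoid_rewrite Hneg; split.
  - intros [s [Hs Hnone]].
    exists (fun x => x = s); split; [intros x ->; assumption|].
    intros i Hi; split; [exists s; reflexivity|intros x ->; auto].
  - intros [X1 [HX1 Hnone]].
    destruct (Hnone 0) as [[s Hs] _]; [lia|].
    exists s; split; [auto|intros i Hi; apply (Hnone i Hi); assumption].
Qed.

End Models.

Theorem lemma5p5 (Sigma A : Type) (sat : Sigma -> A -> Prop)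
  (neg : A -> A) (Hneg : forall s a, sat s (neg a) <-> ~ sat s a)
  (S : Sigma -> Prop) (n : nat) (Q : nat -> A) (Hn : 1 <= n) :
  ~ models sat S (bigOplus (fun i => Atom (Q i)) n) <->
  ((exists i, i < n /\ models sat S (Atom (neg (Q i))))
   \/ models sat S (Oplus (bigAnd (fun i => Atom (neg (Q i))) n) Top)
   \/ models sat S TopPlus).
Proof.
  rewrite (models_bigOplus_Atom Q n S Hn), not_witnessed_and_covered,
    (models_Atom_neg_or_TopPlus Hneg Q n S Hn),
    (models_bigAnd_neg_Oplus_Top Hneg Q n S Hn).
  tauto.
Qed.
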